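(* Let $A=(A[1],\dots,A[n])$ be an array of $n$ pairwise distinct real numbers and let $G$ be the corresponding graph of $A$ with reach one. Let $F$ be the resulting DFS forest of $G$ (for a visiting list that is some ordering of all vertices). Merge the sub-trees of $F$ and call the resulting graph $H'$. Let $H_1$ and $R_1$ be the graph and the root list produced by the merge step applied to $H'$ with the list of roots of $F$ (in some order), and let $F_1$ be the resulting DFS forest of $H_1$ with visiting list $R_1$. For $i>1$, let $H_i$ and $R_i$ be the graph and root list produced by the merge step applied to $F_{i-1}$ with root list $R_{i-1}$, and let $F_i$ be the resulting DFS forest of $H_i$ with visiting list $R_i$. Then there exists a finite $i$ such that $F_i$ is a directed Hamiltonian path on all $n$ vertices, and the topological sort of $F_i$ is the sequence of indices of the sorted array of $A$.
   Context: An array is a finite sequence $A=(A[1],\dots,A[n])$ of pairwise distinct real numbers. A comparison graph on $A$ is a directed graph with vertex set $\{1,\dots,n\}$ in which every arc $(u,v)$ satisfies $A[u]<A[v]$. The corresponding graph of $A$ with reach $r\ge1$ is the directed graph on $\{1,\dots,n\}$ having an arc $(i,j)$ for every $i\neq j$ with $A[i]<A[j]$ such that $j\equiv i+k$ or $j\equiv i-k \pmod n$ for some $1\le k\le r$ (indices cyclic). Components of a directed graph are the connected components of its underlying undirected graph. A directed Hamiltonian path of a graph (or of a component) is a directed path visiting each of its vertices exactly once. A topological sort of a directed acyclic graph is an ordering of all vertices such that every arc goes from an earlier to a later vertex. The sequence of indices of the sorted array of $A$ is the permutation $(\sigma_1,\dots,\sigma_n)$ of $\{1,\dots,n\}$ with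 $A[\sigma_1]<\dots<A[\sigma_n]$. DFS: adjacency lists are sorted in increasing order of $A$-value; given a visiting list $(l_1,\dots,l_m)$, for $t=1,\dots,m$, if $l_t$ is unvisited call Visit$(l_t)$, where Visit$(u)$ marks $u$ visited and, for each out-neighbour $w$ of $u$ in increasing order of $A[w]$ that is still unvisited, sets parent$(w)=u$ and calls Visit$(w)$. The resulting DFS forest is the directed graph on the same vertex set with arcs $(\mathrm{parent}(w),w)$; its roots are the vertices without parent. Merging the sub-trees of a DFS forest $F$ of the reach-one corresponding graph: for each component of $F$ whose root has exactly two children $a_1,b_1$, set $p=a_1$, $q=b_1$ and, while both $p,q$ are defined: if $A[p]<A[q]$ add the arc $(p,q)$ and replace $p$ by its smallest-valued child in $F$ (undefined if none); otherwise add the arc $(q,p)$ and replace $q$ by its smallest-valued child in $F$ (undefined if none). Component merge of two distinct components $C,D$ of a comparison graph: set $p,q$ to the minimum-valued vertices of $C,D$; while both are defined: if $A[p]<A[q]$ add the arc $(p,q)$ and replace $p$ by the smallest-valued out-neighbour of $p$ in $C$ (ignoring arcs added during this merge; undefined if none); otherwise add $(q,p)$ and replace $q$ analogously within $D$. Merge step: given a comparison graph whose components each have a minimum-valued vertex (its root) and a list $(\rho_1,\dots,\rho_k)$ of these roots, perform the component merge of the components of $\rho_{2j-1}$ and $\rho_{2j}$ for $j=1,\dots,\lfloor k/2\rfloor$, and return the new root list obtained from $(\rho_1,\dots,\rho_k)$ by deleting, from each merged pair, the root of larger value. *)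

(* Arrays are A : 'I_n -> R (0-based indices), graphs are
   boolean relations on a finite vertex type. *)
From HB Require Import structures.
From mathcomp Require Import all_boot all_order all_algebra.
From mathcomp Require Import reals.
Set Implicit Arguments. Unset Strict Implicit. Unset Printing Implicit Defensive.
Import Order.TTheory GRing.Theory Num.Theory.

Section Defs.
Variables (R : realDomainType) (T : finType) (A : T -> R).

Definition sort_by_val (s : seq T) : seq T := sort (fun x y => (A x <= A y)%R) s.
Definition min_by_val (s : seq T) : option T := ohead (sort_by_val s).

Definition out_nbrs (g : rel T) (u : T) : seq T := sort_by_val (enum [pred w | g u w]).

(* Visit(u): state = (visited set, parent function); k is fuel
   (#|T|.+1 always suffices since each nested call visits a new vertex). *)
Fixpoint visit (k : nat) (g : rel T) (st : {set T} * (T -> option T)) (u : T)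
  : {set T} * (T -> option T) :=
  match k with
  | 0 => st
  | k'.+1 =>
      foldl (fun (st' : {set T} * (T -> option T)) (w : T) =>
               if w \in st'.1 then st'
               else visit k' g (st'.1, fun x : T => if x == w then Some u else st'.2 x) w)
            (u |: st.1, st.2) (out_nbrs g u)
  end.

Definition dfs_parent (g : rel T) (l : seq T) : T -> option T :=
  (foldl (fun (st : {set T} * (T -> option T)) (r : T) => if r \in st.1 then st else visit #|T|.+1 g st r)
         (set0, fun _ : T => None) l).2.

Definition dfs_forest (g : rel T) (l : seq T) : rel T :=
  fun u w => dfs_parent g l w == Some u.

Definition is_root (F : rel T) (r : T) : bool := [forall u, ~~ F u r].

Definition add_arcs (g : rel T) (s : seq (T * T)) : rel T :=
  fun u v => g u v || ((u, v) \in s).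

(* the common while-loop of the two merge procedures: the successor of p is
   its smallest-valued out-neighbour in g (g = the graph before the merge,
   so arcs added during the merge are ignored). *)
Fixpoint merge_chain (k : nat) (g : rel T) (p q : T) : seq (T * T) :=
  match k with
  | 0 => [::]
  | k'.+1 =>
      if (A p < A q)%R then
        (p, q) :: (if min_by_val (enum [pred w | g p w]) is Some p'
                   then merge_chain k' g p' q else [::])
      else
        (q, p) :: (if min_by_val (enum [pred w | g q w]) is Some q'
                   then merge_chain k' g p q' else [::])
  end.

Definition children (F : rel T) (u : T) : seq T := sort_by_val (enum [pred w | F u w]).

Definition merge_subtrees (F : rel T) : rel T :=
  add_arcs F (flatten [seq (match children F r with
                            | [:: a; b] => merge_chain #|T|.+1 F a b
                            | _ => [::] end) | r <- enum T & is_root F r]).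

Definition ugraph (g : rel T) : rel T := fun u v => g u v || g v u.
Definition comp_min (g : rel T) (r : T) : T :=
  odflt r (min_by_val (enum [pred v | connect (ugraph g) r v])).

Fixpoint merge_arcs (g : rel T) (rs : seq T) : seq (T * T) :=
  match rs with
  | a :: b :: rs' => merge_chain #|T|.+1 g (comp_min g a) (comp_min g b) ++ merge_arcs g rs'
  | _ => [::]
  end.

Fixpoint merge_roots (rs : seq T) : seq T :=
  match rs with
  | a :: b :: rs' => (if (A a < A b)%R then a else b) :: merge_roots rs'
  | _ => rs
  end.

Definition merge_step (g : rel T) (rs : seq T) : rel T * seq T :=
  (add_arcs g (merge_arcs g rs), merge_roots rs).

(* iteration: state 0 = (H', R_0); state i+1 = (F_{i+1}, R_{i+1}) where
   (H_{i+1}, R_{i+1}) = merge_step (state i) and F_{i+1} = DFS of H_{i+1} from R_{i+1}. *)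
Fixpoint iter_state (X0 : rel T) (R0 : seq T) (i : nat) : rel T * seq T :=
  match i with
  | 0 => (X0, R0)
  | i'.+1 =>
      let st := iter_state X0 R0 i' in
      let ms := merge_step st.1 st.2 in
      (dfs_forest ms.1 ms.2, ms.2)
  end.

Definition is_ham_path_graph (F : rel T) (s : seq T) : Prop :=
  [/\ uniq s, (forall x, x \in s) & (forall u v, F u v = ((u, v) \in zip s (behead s)))].

Definition is_topsort (g : rel T) (t : seq T) : bool :=
  perm_eq t (enum T) && [forall u, forall v, g u v ==> (index u t < index v t)].

End Defs.

Definition corr_graph (R : realDomainType) (n : nat) (A : 'I_n -> R) (r : nat) : rel 'I_n :=
  fun i j => [&& i != j, (A i < A j)%R &
              [exists k : 'I_r, ((i + k.+1) %% n == j) || ((j + k.+1) %% n == i)]].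

From HB Require Import structures.
From mathcomp Require Import all_boot all_order all_algebra.
From mathcomp Require Import reals.
From mathcomp Require Import zify.
Set Implicit Arguments. Unset Strict Implicit. Unset Printing Implicit Defensive.
Import Order.TTheory GRing.Theory Num.Theory.

(* Every graph met along the iteration is described by a partition of the vertices into
   blocks, each rooted at its minimum, such that every arc goes upward inside a block and
   any two elements of a block that are consecutive in A-order are joined by an arc.
   Started at the roots, DFS in such a graph always moves to the smallest out-neighbour,
   which is the successor in the block, so the DFS forest is exactly the union of the
   sorted chains of the blocks. A component merge of two sorted chains walks down both
   chains at once and adds precisely the missing arcs between consecutive elements of the
   union, so the invariant passes to the paired blocks, and every round halves the number
   of blocks. Initially, the reach-one graph is a cycle, so in its DFS forest a non-root
   has at most one child and a root at most two: every tree is its root above at most two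
   increasing chains, and merging the sub-trees makes every tree a block. After as many
   rounds as there are roots a single block is left, whose chain is the sorted array. *)

Lemma seq_ind2 (X : Type) (P : seq X -> Prop) :
  P [::] -> (forall x, P [:: x]) -> (forall x y s, P s -> P [:: x, y & s]) ->
  forall s, P s.
Proof.
move=> P0 P1 P2 s; have [m] := ubnP (size s).
elim: m s => [//|m IH] [|x [|y s]] //= lt_s; apply: P2; apply: IH; exact: ltnW.
Qed.

Lemma mem_zip_fst (X Y : eqType) (s : seq X) (t : seq Y) x y :
  (x, y) \in zip s t -> x \in s.
Proof.
elim: s t => [|x' s IH] [|y' t] //=; rewrite !inE => /orP [/eqP [-> _]|/IH ->].
  by rewrite eqxx.
by rewrite orbT.
Qed.

Lemma sub_count_lt (X : eqType) (a1 a2 : pred X) s z :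
  subpred a1 a2 -> z \in s -> a2 z -> ~~ a1 z -> count a1 s < count a2 s.
Proof.
move=> sub12; elim: s => [//|w s IH] /=; rewrite inE => /orP [/eqP <-|zs] a2z a1z.
  by rewrite a2z (negbTE a1z) add0n add1n ltnS sub_count.
have := IH zs a2z a1z; have := sub12 w.
by case: (a1 w) => [/(_ isT) ->|]; case: (a2 w) => /=; lia.
Qed.

Lemma mem_flatten_uniq (X : eqType) (ss : seq (seq X)) s1 s2 x : uniq (flatten ss) ->
  s1 \in ss -> s2 \in ss -> x \in s1 -> x \in s2 -> s1 = s2.
Proof.
elim: ss => [//|s ss IH] /=; rewrite cat_uniq => /and3P [_ disj ss_uniq].
have notin_ss t : t \in ss -> x \in s -> x \in t -> False.
  move=> tss xs xt; move/negP: disj; apply; apply/hasP; exists x => //.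
  by apply/flattenP; exists t.
rewrite !inE => /predU1P [->|s1ss] /predU1P [->|s2ss] // x1 x2.
- by case: (notin_ss _ s2ss x1 x2).
- by case: (notin_ss _ s1ss x2 x1).
- exact: IH.
Qed.

Lemma sorted_zip (X : Type) (e : rel X) s :
  sorted e s = all [pred p | e p.1 p.2] (zip s (behead s)).
Proof. by case: s => // x s; elim: s x => //= y s IH x; rewrite IH. Qed.

Lemma sorted_index (X : eqType) (s : seq X) : uniq s -> sorted (fun x y => index x s < index y s) s.
Proof.
case: s => [//|x s] s_uniq; apply/(pathP x) => i lt_i.
by rewrite -[nth x s i]/(nth x (x :: s) i.+1) !index_uniq //= ltnW.
Qed.

Lemma ham_path_topsortP (T : finType) (g : rel T) s t :
  is_ham_path_graph g s -> is_topsort g t <-> t = s.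
Proof.
case=> s_uniq s_all g_eq; split=> [/andP [t_perm /forallP t_ord]|->].
  have t_uniq : uniq t by rewrite (perm_uniq t_perm) enum_uniq.
  apply: (irr_sorted_eq (leT := fun x y => index x t < index y t)) => [||||z].
  - by move=> ? ? ?; apply: ltn_trans.
  - by move=> x; rewrite ltnn.
  - exact: sorted_index.
  - rewrite sorted_zip; apply/allP => -[u v] /= uv.
    by have /forallP /(_ v) /implyP := t_ord u; apply; rewrite g_eq.
  - by rewrite s_all (perm_mem t_perm) mem_enum.
apply/andP; split; first by rewrite uniq_perm ?enum_uniq // => z; rewrite s_all mem_enum.
apply/forallP => u; apply/forallP => v; apply/implyP; rewrite g_eq.
by have := sorted_index s_uniq; rewrite sorted_zip => /allP; apply.
Qed.

Section SortedChains.
Variables (R : realDomainType) (T : finType) (A : T -> R).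
Hypothesis A_inj : injective A.

Local Notation ltA := (fun x y : T => (A x < A y)%R).
Local Notation leA := (fun x y : T => (A x <= A y)%R).

Lemma ltA_trans : transitive ltA.
Proof. by move=> y x z /= /lt_trans; apply. Qed.

Lemma leA_trans : transitive leA.
Proof. by move=> y x z /= /le_trans; apply. Qed.

Lemma leA_total : total leA.
Proof. by move=> x y; apply: le_total. Qed.

Lemma leA_anti x y : (A x <= A y)%R -> (A y <= A x)%R -> x = y.
Proof. by move=> xy yx; apply: A_inj; apply/eqP; rewrite eq_le xy yx. Qed.

Lemma gtA_of_nltA x y : x != y -> ~~ (A x < A y)%R -> (A y < A x)%R.
Proof.
by move=> /eqP xy; rewrite -leNgt le_eqVlt => /orP [/eqP/A_inj/esym|].
Qed.

Lemma uniq_size_le_card (s : seq T) : uniq s -> size s <= #|T|.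
Proof. by move=> s_uniq; rewrite -(card_uniqP s_uniq) max_card. Qed.

Lemma mem_sort_by_val s : sort_by_val A s =i s.
Proof. exact: mem_sort. Qed.

Lemma sort_by_val_sorted s : sorted leA (sort_by_val A s).
Proof. exact/sort_sorted/leA_total. Qed.

Lemma sort_by_val_ltA_sorted s : uniq s -> sorted ltA (sort_by_val A s).
Proof.
rewrite -(sort_uniq leA); have := sort_by_val_sorted s; rewrite /sort_by_val.
case: (sort _ s) => [//|x t] /=; elim: t x => [//|y t IH] x /= /andP [xy yt].
case/andP=> /[!inE] /norP [/eqP nxy _] /[dup] ut /andP [_ ut'].
rewrite IH // andbT lt_neqAle xy andbT; by apply/eqP => /A_inj yx; apply: nxy; rewrite yx.
Qed.

Lemma sort_by_val_min_head s m : m \in s -> (forall z, z \in s -> (A m <= A z)%R) ->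
  exists t, sort_by_val A s = m :: t.
Proof.
move=> ms m_min; have := sort_by_val_sorted s; have := mem_sort_by_val s.
case: (sort_by_val A s) => [|y t] mem_st st_sorted; first by move: ms; rewrite -mem_st.
exists t; congr (_ :: _); apply: leA_anti; last by apply: m_min; rewrite -mem_st mem_head.
have := order_path_min leA_trans st_sorted => /allP y_min.
by move: ms; rewrite -mem_st inE => /predU1P [->|/y_min].
Qed.

Lemma min_by_val_eq s m : m \in s -> (forall z, z \in s -> (A m <= A z)%R) ->
  min_by_val A s = Some m.
Proof. by move=> ms /(sort_by_val_min_head ms) [t]; rewrite /min_by_val => ->. Qed.

Lemma path_ltA_min x s : path ltA x s -> {in s, forall z, (A x < A z)%R}.
Proof. by move/(order_path_min ltA_trans)/allP. Qed.

Lemma path_ltA_notin x s : path ltA x s -> x \notin s.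
Proof. by move/path_ltA_min => x_min; apply/negP => /x_min; rewrite ltxx. Qed.

Definition succ_in (b : seq T) (u v : T) : bool :=
  [&& u \in b, v \in b, (A u < A v)%R & all (fun z => (A u < A z)%R ==> (A v <= A z)%R) b].

Lemma succ_inP b u v : reflect
  [/\ u \in b, v \in b, (A u < A v)%R & forall z, z \in b -> (A u < A z)%R -> (A v <= A z)%R]
  (succ_in b u v).
Proof.
apply: (iffP and4P) => [[-> -> -> /allP v_min]|[-> -> -> v_min]]; split => //.
  by move=> z /v_min /implyP.
by apply/allP => z /v_min /implyP.
Qed.

Lemma succ_in_eq_mem b1 b2 : b1 =i b2 -> succ_in b1 =2 succ_in b2.
Proof. by move=> eq_b u v; rewrite /succ_in !eq_b (eq_all_r eq_b). Qed.

Lemma succ_in_fun b u v1 v2 : succ_in b u v1 -> succ_in b u v2 -> v1 = v2.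
Proof.
move=> /succ_inP [u_b v1_b uv1 min1] /succ_inP [_ v2_b uv2 min2].
by apply: leA_anti; [apply: min1 | apply: min2].
Qed.

Lemma exists_succ_in b x z : x \in b -> z \in b -> (A x < A z)%R -> exists y, succ_in b x y.
Proof.
move=> xb zb xz; set above := [seq w <- b | (A x < A w)%R].
have := mem_sort_by_val above; have := sort_by_val_sorted above.
case: (sort_by_val A above) => [_ /(_ z)|y t]; first by rewrite mem_filter xz zb.
move=> /(order_path_min leA_trans) /allP y_min mem_t.
have: y \in above by rewrite -mem_t mem_head.
rewrite mem_filter => /andP [xy yb]; exists y; apply/succ_inP; split => // w wb xw.
have: w \in y :: t by rewrite mem_t mem_filter xw wb.
by rewrite inE => /predU1P [->|/y_min].
Qed.

Lemma succ_in_restrict s s' x y : x \in s' -> y \in s' ->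
  (forall z, z \in s' -> (A x < A z)%R -> z \in s) -> succ_in s x y -> succ_in s' x y.
Proof.
move=> xs' ys' sub /succ_inP [_ _ xy y_min]; apply/succ_inP; split=> // z zs' xz.
exact/y_min/xz/sub.
Qed.

Lemma succ_in_min b u r : (forall z, z \in b -> (A r <= A z)%R) -> ~~ succ_in b u r.
Proof.
move=> r_min; apply/negP => /succ_inP [ub _ ur _].
by move: (lt_le_trans ur (r_min u ub)); rewrite ltxx.
Qed.

Lemma succ_in_head x y s u : path ltA x (y :: s) -> succ_in [:: x, y & s] u y = (u == x).
Proof.
move=> /[dup] xys /= /andP [xy ys]; apply/succ_inP/eqP => [[+ _ uy _]|->].
  rewrite !inE => /predU1P [//|/predU1P [eq_uy|us]]; first by rewrite eq_uy ltxx in uy.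
  by have := lt_trans uy (path_ltA_min ys us); rewrite ltxx.
split; rewrite ?inE ?eqxx ?orbT // => z /predU1P [->|/predU1P [-> //|zs] _]; first by rewrite ltxx.
exact/ltW/(path_ltA_min ys).
Qed.

Lemma succ_in_cons x s u v : path ltA x s -> u != x -> succ_in (x :: s) u v = succ_in s u v.
Proof.
move=> /path_ltA_min x_min ux.
apply/idP/idP => [|/succ_inP [us vs uv v_min]].
  move=> /[dup] /succ_inP [+ + uv _]; rewrite !inE (negbTE ux) /= => us.
  case/predU1P => [eq_vx|vs]; last by apply: succ_in_restrict => // z /[!inE] ->; rewrite orbT.
  by have := lt_trans (x_min _ us) uv; rewrite eq_vx ltxx.
apply/succ_inP; split; rewrite ?inE ?us ?vs ?orbT // => z /predU1P [->|]; last exact: v_min.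
by move=> /(lt_trans (x_min _ us)); rewrite ltxx.
Qed.

Lemma mem_zip_succ x s u v : path ltA x s -> ((u, v) \in zip (x :: s) s) = succ_in (x :: s) u v.
Proof.
elim: s x => [|y s IH] x xs.
  apply/esym/negbTE/succ_inP => -[] /[!inE] /eqP -> /eqP ->; by rewrite ltxx.
rewrite /= in_cons xpair_eqE; case: (eqVneq u x) => [->|ux] /=; last first.
  by rewrite (succ_in_cons _ xs ux) IH //; case/andP: xs.
have -> : ((x, v) \in zip (y :: s) s) = false.
  by apply/negbTE; apply: contraNN (path_ltA_notin xs) => /mem_zip_fst.
rewrite orbF; have x_y : succ_in [:: x, y & s] x y by rewrite succ_in_head.
by apply/eqP/idP => [->|/(succ_in_fun x_y)].
Qed.

Lemma succ_in_cons_head x y s u v : path ltA x (y :: s) -> v != y ->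
  succ_in [:: x, y & s] u v = succ_in (y :: s) u v.
Proof.
move=> xys vy; case: (eqVneq u x) => [->|ux]; last exact: succ_in_cons.
have x_y : succ_in [:: x, y & s] x y by rewrite succ_in_head.
apply/idP/idP => [/(succ_in_fun x_y) eq_yv|/succ_inP [x_in _ _ _]].
  by rewrite eq_yv eqxx in vy.
by rewrite (negbTE (path_ltA_notin xys)) in x_in.
Qed.

Definition up_closed (g : rel T) (b : seq T) :=
  forall u w, u \in b -> g u w -> w \in b /\ (A u < A w)%R.

Definition spans_chain (g : rel T) (b : seq T) := forall u v, succ_in b u v -> g u v.

Lemma up_closed_out g x s w : up_closed g (x :: s) -> g x w -> w \in s.
Proof.
move=> up /(up _ _ (mem_head _ _)) [/[!inE] /predU1P [eq_wx|//]].
by rewrite eq_wx ltxx.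
Qed.

Lemma up_closed_behead g x s : path ltA x s -> up_closed g (x :: s) -> up_closed g s.
Proof.
move=> /path_ltA_min x_min up u w us guw.
have [/[!inE] /predU1P [wx|//] uw] := up u w (mem_behead (us : u \in behead (x :: s))) guw.
by have := lt_trans (x_min _ us) uw; rewrite wx ltxx.
Qed.

Lemma spans_chain_behead g x s : path ltA x s -> spans_chain g (x :: s) -> spans_chain g s.
Proof.
move=> xs span u v /[dup] /succ_inP [us _ _ _] suv; apply: span.
by rewrite succ_in_cons //; apply: contraTneq us => ->; apply: path_ltA_notin xs.
Qed.

Lemma out_nbrsP g x w : (w \in out_nbrs A g x) = g x w.
Proof. by rewrite mem_sort_by_val mem_enum inE. Qed.

Lemma min_by_val_out_nbrs g p : min_by_val A (enum [pred w | g p w]) = ohead (out_nbrs A g p).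
Proof. by []. Qed.

Lemma ohead_out_nbrs_arc g p y : ohead (out_nbrs A g p) = Some y -> g p y.
Proof. by rewrite -out_nbrsP; case: (out_nbrs A g p) => //= _ ? [->]; rewrite mem_head. Qed.

Section OutNeighbours.
Variables (g : rel T) (b : seq T).
Hypotheses (b_up : up_closed g b) (b_span : spans_chain g b).

Lemma out_nbrs_succ p y : succ_in b p y -> exists rest, out_nbrs A g p = y :: rest.
Proof.
move=> /[dup] /succ_inP [pb _ _ y_min] /b_span gpy.
apply: sort_by_val_min_head => [|z]; rewrite mem_enum inE //.
by move=> /(b_up pb) [zb pz]; apply: y_min.
Qed.

Lemma ohead_out_nbrs_succ p y : p \in b -> ohead (out_nbrs A g p) = Some y -> succ_in b p y.
Proof.
move=> pb E; have /(b_up pb) [yb py] := ohead_out_nbrs_arc E.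
have [y' py'] := exists_succ_in pb yb py.
by have [rest E'] := out_nbrs_succ py'; move: E; rewrite E' => -[<-].
Qed.

Lemma out_nbrs_nil p z : p \in b -> z \in b -> (A p < A z)%R -> out_nbrs A g p != [::].
Proof.
by move=> pb zb pz; have [y /out_nbrs_succ [rest ->]] := exists_succ_in pb zb pz.
Qed.

End OutNeighbours.

Definition parent_arcs (g : rel T) (par : T -> option T) := forall y w, par y = Some w -> g w y.

Lemma visit_parent_arcs g k st u : parent_arcs g st.2 -> parent_arcs g (visit A k g st u).2.
Proof.
elim: k st u => [//|k IH] st u st_arcs /=.
have : {subset out_nbrs A g u <= out_nbrs A g u} by [].
have : parent_arcs g (u |: st.1, st.2).2 by [].
elim: {-2}(out_nbrs A g u) (u |: st.1, st.2) => [//|w l IHl] st' st'_arcs sub_l /=.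
apply: IHl => [|z zl]; last by apply: sub_l; rewrite inE zl orbT.
case: ifP => // _; apply: IH => y w' /=; case: ifP => [/eqP -> [<-]|_ /st'_arcs //].
by rewrite -out_nbrsP; apply: sub_l; rewrite mem_head.
Qed.

Lemma dfs_parent_arc g l v u : dfs_parent A g l v = Some u -> g u v.
Proof.
have : parent_arcs g (set0 : {set T}, fun _ : T => None).2 by [].
rewrite /dfs_parent; elim: l (set0, _) => [|r l IH] st st_arcs; first exact: st_arcs.
by apply: IH; case: ifP => // _; apply: visit_parent_arcs.
Qed.

Lemma foldl_skip_visited (S : Type) (h : {set T} * S -> T -> {set T} * S)
    (l : seq T) (st : {set T} * S) :
  {subset l <= st.1} ->
  foldl (fun (st' : {set T} * S) w => if w \in st'.1 then st' else h st' w) st l = st.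
Proof.
elim: l => [//|w l IH] l_sub /=; rewrite l_sub ?mem_head // IH // => z zl.
by apply: l_sub; rewrite inE zl orbT.
Qed.

Lemma visit_chain g x s k (S : {set T}) par :
  path ltA x s -> up_closed g (x :: s) -> spans_chain g (x :: s) -> size s < k ->
  (forall y, y \in x :: s -> y \notin S) ->
  (visit A k g (S, par) x).1 = S :|: [set y in x :: s] /\
  forall y u, ((visit A k g (S, par) x).2 y == Some u) =
              if y \in s then succ_in (x :: s) u y else par y == Some u.
Proof.
elim: s x k S par => [|y0 s IH] x [//|k] S par xs up span lt_k fresh /=.
  case E: (out_nbrs A g x) => [|w ws] /=.
    by split=> //; apply/setP => z; rewrite !inE orbC.
  have : g x w by rewrite -out_nbrsP E mem_head.
  by move=> /(up_closed_out up).
have x_y0 : succ_in [:: x, y0 & s] x y0 by rewrite succ_in_head.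
have [rest E] := out_nbrs_succ up span x_y0.
have x_notin := path_ltA_notin xs.
have y0s : path ltA y0 s by case/andP: xs.
have y0_notin := path_ltA_notin y0s.
have fresh' : forall y, y \in y0 :: s -> y \notin x |: S.
  move=> y ys; rewrite !inE negb_or fresh; last by rewrite inE ys orbT.
  by rewrite andbT; apply: contraNneq x_notin => <-.
have [IH1 IH2] := IH y0 k (x |: S) (fun z => if z == y0 then Some x else par z) y0s
  (up_closed_behead xs up) (spans_chain_behead xs span) lt_k fresh'.
rewrite E /= !inE (negbTE (fresh _ _)) ?inE ?eqxx ?orbT // orbF.
have -> : (y0 == x) = false by apply: contraNF x_notin => /eqP <-; rewrite mem_head.
(* The visit of the successor y0 already covers every other out-neighbour of x. *)
rewrite foldl_skip_visited; last first.
  move=> w w_rest; have /(up_closed_out up) : g x w by rewrite -out_nbrsP E inE w_rest orbT.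
  by rewrite IH1 !inE => ->; rewrite !orbT.
split=> [|y u]; first by apply/setP => z; rewrite IH1 !inE; case: (z == x); rewrite /= ?orbT.
rewrite IH2 inE; case: (eqVneq y y0) => [->|yy0] /=.
  by rewrite (negbTE y0_notin) succ_in_head // eq_sym.
by case: ifP => // ys; rewrite succ_in_cons_head.
Qed.

(* A block (r, b) is a component b of the current graph together with its root r; the
   roots of a list of blocks form the paper's root list. *)
Definition block_partition (bs : seq (T * seq T)) : Prop :=
  [/\ forall rb, rb \in bs -> rb.1 \in rb.2 /\ (forall z, z \in rb.2 -> (A rb.1 <= A z)%R),
      uniq (flatten (map snd bs)) & forall x, x \in flatten (map snd bs)].

Definition same_block (bs : seq (T * seq T)) u v := has (fun rb => (u \in rb.2) && (v \in rb.2)) bs.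

Definition block_succ (bs : seq (T * seq T)) u v := has (fun rb => succ_in rb.2 u v) bs.

Definition spans_chains (g : rel T) bs : Prop :=
  [/\ block_partition bs, forall u v, g u v -> (A u < A v)%R /\ same_block bs u v
    & forall u v, block_succ bs u v -> g u v].

Definition is_chains (g : rel T) bs : Prop := block_partition bs /\ g =2 block_succ bs.

Lemma same_blockC bs u v : same_block bs u v = same_block bs v u.
Proof. by apply: eq_has => rb; rewrite andbC. Qed.

Lemma same_block_mem bs rb u v : block_partition bs -> rb \in bs -> u \in rb.2 ->
  same_block bs u v -> v \in rb.2.
Proof.
case=> _ bs_uniq _ rb_bs u_rb /hasP [rb' rb'_bs /andP [u_rb' v_rb']].
by rewrite (mem_flatten_uniq bs_uniq (map_f _ rb_bs) (map_f _ rb'_bs) u_rb u_rb').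
Qed.

Lemma block_succ_mem bs u v : block_succ bs u v -> v \in flatten (map snd bs).
Proof.
by case/hasP => rb rb_bs /succ_inP [_ v_rb _ _]; apply/flattenP; exists rb.2; rewrite ?map_f.
Qed.

Lemma block_succ_sub bs bs' u v : {subset bs' <= bs} -> block_succ bs' u v -> block_succ bs u v.
Proof. by move=> sub /hasP [rb /sub rb_bs succ_uv]; apply/hasP; exists rb. Qed.

Lemma spans_chains_block g bs rb : spans_chains g bs -> rb \in bs ->
  up_closed g rb.2 /\ spans_chain g rb.2.
Proof.
case=> part g_up g_span rb_bs; split=> [u w u_rb /g_up [uw same]|u v suv].
  by split=> //; apply: same_block_mem same.
by apply: g_span; apply/hasP; exists rb.
Qed.

Lemma visit_block g bs r b N (S : {set T}) par : spans_chains g bs -> (r, b) \in bs ->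
  uniq b -> #|T| < N -> (forall y, y \in b -> y \notin S) -> par r = None ->
  (visit A N g (S, par) r).1 = S :|: [set y in b] /\
  forall y u, ((visit A N g (S, par) r).2 y == Some u) =
              if y \in b then succ_in b u y else par y == Some u.
Proof.
move=> chains rb_bs b_uniq lt_N fresh par_r.
have [[b_min _ _] _ _] := chains; have [/= r_b r_min] := b_min _ rb_bs.
have [up span] := spans_chains_block chains rb_bs.
have [tl E] := sort_by_val_min_head r_b r_min.
have mem_tl : r :: tl =i b by move=> z; rewrite -E mem_sort_by_val.
have tl_sorted : path ltA r tl by have := sort_by_val_ltA_sorted b_uniq; rewrite E.
have tl_up : up_closed g (r :: tl) by move=> u w; rewrite !mem_tl; apply: up.
have tl_span : spans_chain g (r :: tl) by move=> u v; rewrite (succ_in_eq_mem mem_tl); apply: span.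
have tl_size : size tl < N.
  have := uniq_size_le_card b_uniq.
  by rewrite -(size_sort leA) -/(sort_by_val A b) E => /ltn_trans; apply.
have tl_fresh : forall y, y \in r :: tl -> y \notin S by move=> y; rewrite mem_tl; apply: fresh.
have [V1 V2] := visit_chain par tl_sorted tl_up tl_span tl_size tl_fresh.
split=> [|y u]; first by apply/setP => z; rewrite V1 !inE -mem_tl inE.
rewrite V2 -mem_tl inE (succ_in_eq_mem mem_tl); case: (eqVneq y r) => [->|//] /=.
by rewrite par_r; case: ifP => // _; apply/esym/negbTE/succ_in_min.
Qed.

Lemma dfs_fold_chains g bs bs' N (S : {set T}) par : #|T| < N ->
  spans_chains g bs -> {subset bs' <= bs} ->
  uniq (flatten (map snd bs')) -> (forall y, y \in flatten (map snd bs') -> y \notin S) ->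
  (forall y, y \notin S -> par y = None) ->
  forall y u,
  ((foldl (fun (st : {set T} * (T -> option T)) r =>
             if r \in st.1 then st else visit A N g st r)
          (S, par) (map fst bs')).2 y == Some u) =
  if y \in flatten (map snd bs') then block_succ bs' u y else par y == Some u.
Proof.
move=> lt_N chains; elim: bs' S par => [//|[r b] bs' IH] S par /= sub_bs.
rewrite cat_uniq => /and3P [b_uniq /hasPn b_disj bs'_uniq] fresh par_None y u.
have rb_bs : (r, b) \in bs by apply: sub_bs; rewrite mem_head.
have [[b_min _ _] _ _] := chains; have [/= r_b _] := b_min _ rb_bs.
have b_fresh z : z \in b -> z \notin S by move=> zb; apply: fresh; rewrite mem_cat zb.
have [V1 V2] := visit_block chains rb_bs b_uniq lt_N b_fresh (par_None _ (b_fresh _ r_b)).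
rewrite (negbTE (b_fresh _ r_b)); case: (visit _ _ _ _ _) V1 V2 => S1 par1 /= V1 V2.
have sub_bs' : {subset bs' <= bs} by move=> rb rb_bs'; apply: sub_bs; rewrite inE rb_bs' orbT.
have fresh1 z : z \in flatten (map snd bs') -> z \notin S1.
  move=> zbs; rewrite V1 !inE negb_or fresh ?mem_cat ?zbs ?orbT //=.
  exact: b_disj.
have par1_None z : z \notin S1 -> par1 z = None.
  rewrite V1 !inE negb_or => /andP [zS zb].
  by case: (par1 z) (V2 z) => // a /(_ a); rewrite eqxx (negbTE zb) par_None.
rewrite IH // mem_cat /block_succ /= -/(block_succ _ _ _); case: ifP => [ybs|ybs'].
  rewrite orbT /=; case: (boolP (succ_in b u y)) => // /succ_inP [_ yb _ _].
  by move: (b_disj _ ybs); rewrite yb.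
rewrite orbF V2 (contraNF (@block_succ_mem _ _ _) (negbT ybs')) orbF.
by case: ifP.
Qed.

Lemma dfs_forest_chains g bs : spans_chains g bs -> is_chains (dfs_forest A g (map fst bs)) bs.
Proof.
move=> chains; have [part _ _] := chains; have [_ bs_uniq bs_cover] := part.
split=> // u v; rewrite /dfs_forest /dfs_parent (dfs_fold_chains (ltnSn _) chains) //.
  by rewrite bs_cover.
by move=> y _; rewrite in_set0.
Qed.

(* The part of a chain that the merge walk has not yet passed when it stands at p. *)
Definition above (p : T) (b : seq T) := [seq z <- b | (A p <= A z)%R].

Lemma mem_above p b z : (z \in above p b) = (z \in b) && (A p <= A z)%R.
Proof. by rewrite mem_filter andbC. Qed.

Section MergeChainStep.
Variables (g : rel T) (b1 b2 : seq T).
Hypotheses (up1 : up_closed g b1) (span1 : spans_chain g b1) (span2 : spans_chain g b2).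

Lemma merge_chain_step p q x y : p \in b1 -> q \in b2 -> (A p < A q)%R ->
  succ_in (above p b1 ++ above q b2) x y ->
  [\/ x = p /\ y = q, g x y |
   exists p', [/\ min_by_val A (enum [pred w | g p w]) = Some p', p' \in b1,
                succ_in (above p' b1 ++ above q b2) x y &
                size (above p' b1) < size (above p b1)]].
Proof.
move=> pb1 qb2 pq /[dup] sxy /succ_inP [x_in y_in xy y_min].
have q_in : q \in above p b1 ++ above q b2 by rewrite mem_cat !mem_above qb2 lexx orbT.
case: (eqVneq x p) => [eq_xp|xp].
  move: y_in sxy; rewrite eq_xp mem_cat !mem_above => /orP [/andP [yb1 _]|/andP [yb2 qy]] sxy.
    apply: Or32; apply/span1/(succ_in_restrict pb1 yb1 _ sxy) => z zb1 pz.
    by rewrite mem_cat mem_above zb1 ltW.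
  by apply: Or31; split=> //; apply/esym/(leA_anti qy)/y_min; rewrite ?eq_xp.
have px : (A p < A x)%R.
  move: x_in; rewrite mem_cat !mem_above => /orP [/andP [_]|/andP [_ /(lt_le_trans pq)] //].
  by rewrite le_eqVlt => /predU1P [/A_inj eq_px|//]; rewrite eq_px eqxx in xp.
have py := lt_trans px xy.
rewrite min_by_val_out_nbrs; case E: (ohead (out_nbrs A g p)) => [p'|]; last first.
  have in_b2 z : z \in above p b1 ++ above q b2 -> (A p < A z)%R -> z \in above q b2.
    rewrite mem_cat => /orP [|//]; rewrite mem_above => /andP [zb1 _] pz.
    by have := out_nbrs_nil up1 span1 pb1 zb1 pz; case: (out_nbrs A g p) E.
  move: (in_b2 _ x_in px) (in_b2 _ y_in py); rewrite !mem_above => /andP [xb2 qx] /andP [yb2 _].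
  apply/Or32/span2/(succ_in_restrict xb2 yb2 _ sxy) => z zb2 xz.
  by rewrite mem_cat !mem_above zb2 (le_trans qx (ltW xz)) orbT.
have /succ_inP [_ p'b1 pp' p'_min] := ohead_out_nbrs_succ up1 span1 pb1 E.
have above_p' z : (A p < A z)%R ->
    (z \in above p' b1 ++ above q b2) = (z \in above p b1 ++ above q b2).
  move=> pz; rewrite !mem_cat !mem_above (ltW pz); case: (boolP (z \in b1)) => //= zb1.
  by rewrite p'_min.
apply: Or33; exists p'; split=> //.
  apply: (succ_in_restrict _ _ _ sxy); rewrite ?above_p' // => z zs xz.
  by rewrite -above_p' // (lt_trans px xz).
rewrite !size_filter; apply: (sub_count_lt _ pb1); rewrite /= ?lexx -?ltNge //.
by move=> w /= /(le_trans (ltW pp')).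
Qed.

End MergeChainStep.

Section MergeChain.
Variables (g : rel T) (b1 b2 : seq T).
Hypotheses (up1 : up_closed g b1) (up2 : up_closed g b2).
Hypotheses (span1 : spans_chain g b1) (span2 : spans_chain g b2).
Hypothesis disj : forall z, z \in b1 -> z \notin b2.

Lemma merge_chain_arcs k p q x y : p \in b1 -> q \in b2 ->
  (x, y) \in merge_chain A k g p q -> (A x < A y)%R /\ x \in b1 ++ b2 /\ y \in b1 ++ b2.
Proof.
elim: k p q => [//|k IH] p q pb1 qb2 /=; rewrite !min_by_val_out_nbrs.
have pq : p != q by apply: contraTneq (disj pb1) => ->; rewrite qb2.
case: ifP => [lt_pq|nlt_pq]; rewrite inE => /predU1P [[-> ->]|].
- by rewrite !mem_cat pb1 qb2 orbT.
- case E: (ohead (out_nbrs A g p)) => [p'|//]; apply: IH qb2.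
  by have [] := up1 pb1 (ohead_out_nbrs_arc E).
- by rewrite !mem_cat pb1 qb2 orbT; split=> //; apply: gtA_of_nltA; rewrite ?nlt_pq.
- case E: (ohead (out_nbrs A g q)) => [q'|//]; apply: IH pb1 _.
  by have [] := up2 qb2 (ohead_out_nbrs_arc E).
Qed.

Lemma merge_chain_above k p q x y : p \in b1 -> q \in b2 ->
  size (above p b1 ++ above q b2) <= k -> succ_in (above p b1 ++ above q b2) x y ->
  g x y || ((x, y) \in merge_chain A k g p q).
Proof.
elim: k p q x y => [|k IH] p q x y pb1 qb2 size_k.
  by move: size_k; rewrite leqn0 => /nilP ->.
have pq : p != q by apply: contraTneq (disj pb1) => ->; rewrite qb2.
have swap a c : above a b1 ++ above c b2 =i above c b2 ++ above a b1.
  by move=> z; rewrite !mem_cat orbC.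
rewrite /=; case: ifP => [lt_pq|/negbT nlt_pq] sxy.
  case: (merge_chain_step up1 span1 span2 pb1 qb2 lt_pq sxy)
    => [[-> ->]|->|[p' [-> p'b1 sxy' lt_size]]].
  - by rewrite mem_head orbT.
  - by [].
  rewrite inE orbCA IH ?orbT // -ltnS; apply: leq_trans size_k.
  by rewrite !size_cat ltn_add2r.
move: sxy; rewrite (succ_in_eq_mem (swap p q)) => sxy.
have lt_qp := gtA_of_nltA pq nlt_pq.
case: (merge_chain_step up2 span2 span1 qb2 pb1 lt_qp sxy)
  => [[-> ->]|->|[q' [-> q'b2 sxy' lt_size]]].
- by rewrite mem_head orbT.
- by [].
rewrite inE orbCA IH ?orbT ?(succ_in_eq_mem (swap p q')) //.
by rewrite -ltnS (leq_trans _ size_k) // !size_cat ltn_add2l.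
Qed.

Lemma merge_chain_covers k p q x y :
  p \in b1 -> (forall z, z \in b1 -> (A p <= A z)%R) ->
  q \in b2 -> (forall z, z \in b2 -> (A q <= A z)%R) ->
  size (b1 ++ b2) <= k -> succ_in (b1 ++ b2) x y -> g x y || ((x, y) \in merge_chain A k g p q).
Proof.
move=> pb1 p_min qb2 q_min.
have above_id r b : (forall z, z \in b -> (A r <= A z)%R) -> above r b = b.
  by move=> r_min; apply/all_filterP/allP.
rewrite -(above_id p b1 p_min) -(above_id q b2 q_min); exact: merge_chain_above.
Qed.

End MergeChain.

Fixpoint merge_blocks (bs : seq (T * seq T)) : seq (T * seq T) :=
  match bs with
  | rb1 :: rb2 :: bs' =>
      ((if (A rb1.1 < A rb2.1)%R then rb1.1 else rb2.1), rb1.2 ++ rb2.2) :: merge_blocks bs'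
  | _ => bs
  end.

Lemma merge_roots_blocks bs : merge_roots A (map fst bs) = map fst (merge_blocks bs).
Proof. by elim/seq_ind2: bs => //= rb1 rb2 bs ->. Qed.

Lemma flatten_merge_blocks bs : flatten (map snd (merge_blocks bs)) = flatten (map snd bs).
Proof. by elim/seq_ind2: bs => //= rb1 rb2 bs ->; rewrite catA. Qed.

Lemma size_merge_blocks bs : size (merge_blocks bs) <= maxn 1 (size bs).-1.
Proof.
have : (size (merge_blocks bs)).*2 <= (size bs).+1 /\ size (merge_blocks bs) <= size bs.
  by elim/seq_ind2: bs => //= rb1 rb2 bs; rewrite doubleS; lia.
by rewrite -muln2; lia.
Qed.

Lemma same_block_merge bs u v : same_block bs u v -> same_block (merge_blocks bs) u v.
Proof.
elim/seq_ind2: bs => //= rb1 rb2 bs IH; rewrite /same_block /= -!/(same_block _ _ _) !mem_cat.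
by case/orP => [/andP [-> ->] //|/orP [/andP [-> ->]|/IH ->]]; rewrite ?orbT.
Qed.

Lemma block_partition_merge bs : block_partition bs -> block_partition (merge_blocks bs).
Proof.
case=> bs_min bs_uniq bs_cover; split; rewrite ?flatten_merge_blocks //.
elim/seq_ind2: bs bs_min {bs_uniq bs_cover} => //= rb1 rb2 bs IH bs_min rb.
rewrite inE => /predU1P [->|]; last first.
  by apply: IH => rb' rb'_bs; apply: bs_min; rewrite !inE rb'_bs !orbT.
have [r1_b1 r1_min] := bs_min rb1 (mem_head _ _).
have /bs_min [r2_b2 r2_min] : rb2 \in [:: rb1, rb2 & bs] by rewrite !inE eqxx orbT.
rewrite /=; case: ifP => lt12; split; rewrite ?mem_cat ?r1_b1 ?r2_b2 ?orbT // => z.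
  by rewrite mem_cat => /orP [/r1_min //|/r2_min]; apply/le_trans/ltW.
by rewrite mem_cat => /orP [/r1_min|/r2_min //]; apply/le_trans; rewrite leNgt lt12.
Qed.

Lemma comp_min_root g bs rb : spans_chains g bs -> rb \in bs -> comp_min A g rb.1 = rb.1.
Proof.
move=> chains rb_bs; have [[/(_ _ rb_bs) [r_b r_min] _ _] g_up _] := chains.
have [part _ _] := chains.
have rb_closed : closed (ugraph g) rb.2.
  move=> x y xy; have same : same_block bs x y.
    by case/orP: xy => /g_up [_]; rewrite // same_blockC.
  apply/idP/idP => [x_b|y_b]; first exact: same_block_mem part rb_bs x_b same.
  by apply: same_block_mem part rb_bs y_b _; rewrite same_blockC.
rewrite /comp_min (@min_by_val_eq _ rb.1) ?mem_enum ?inE ?connect0 // => z.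
by rewrite mem_enum inE => /(closed_connect rb_closed); rewrite r_b => /esym /r_min.
Qed.

Lemma merge_pair_chains g bs rb1 rb2 : spans_chains g bs -> rb1 \in bs -> rb2 \in bs ->
  uniq (rb1.2 ++ rb2.2) ->
  (forall x y, (x, y) \in merge_chain A #|T|.+1 g (comp_min A g rb1.1) (comp_min A g rb2.1) ->
     (A x < A y)%R /\ x \in rb1.2 ++ rb2.2 /\ y \in rb1.2 ++ rb2.2) /\
  (forall x y, succ_in (rb1.2 ++ rb2.2) x y ->
     g x y || ((x, y) \in merge_chain A #|T|.+1 g (comp_min A g rb1.1) (comp_min A g rb2.1))).
Proof.
move=> chains rb1_bs rb2_bs uniq12; rewrite !(comp_min_root chains) //.
have [[bs_min _ _] _ _] := chains.
have [r1_b1 r1_min] := bs_min _ rb1_bs; have [r2_b2 r2_min] := bs_min _ rb2_bs.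
have [up1 span1] := spans_chains_block chains rb1_bs.
have [up2 span2] := spans_chains_block chains rb2_bs.
have disj : forall z, z \in rb1.2 -> z \notin rb2.2.
  by move: uniq12; rewrite cat_uniq => /and3P [_ /hasPn disj _] z; apply: contraL (disj z).
split=> x y.
  by move=> /(merge_chain_arcs up1 up2 disj r1_b1 r2_b2).
apply: (merge_chain_covers up1 up2 span1 span2 disj) => //; apply: ltnW; rewrite ltnS.
exact: uniq_size_le_card.
Qed.

Lemma merge_arcs_chains g bs bs' : spans_chains g bs -> {subset bs' <= bs} ->
  uniq (flatten (map snd bs')) ->
  (forall x y, (x, y) \in merge_arcs A g (map fst bs') ->
     (A x < A y)%R /\ same_block (merge_blocks bs') x y) /\
  (forall x y, block_succ (merge_blocks bs') x y ->
     g x y || ((x, y) \in merge_arcs A g (map fst bs'))).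
Proof.
move=> chains; have [_ _ g_span] := chains.
elim/seq_ind2: bs' => [_ _|rb sub_bs _|rb1 rb2 bs' IH sub_bs]; first by [].
  by split=> // x y /(block_succ_sub sub_bs) /g_span ->.
rewrite [flatten _]/= catA cat_uniq => /and3P [uniq12 _ bs'_uniq].
have [||arcs12 cover12] := merge_pair_chains chains _ _ uniq12;
  try by apply: sub_bs; rewrite !inE eqxx ?orbT.
have [|//|arcs' cover'] := IH; first by move=> rb rb_bs'; apply: sub_bs; rewrite !inE rb_bs' !orbT.
split=> x y; rewrite /same_block /block_succ /= -/(same_block _ _ _) -/(block_succ _ _ _) mem_cat.
  by case/orP => [/arcs12 [-> [-> ->]]|/arcs' [-> ->]]; rewrite ?orbT.
by case/orP => [/cover12|/cover'] /orP [->|->]; rewrite ?orbT.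
Qed.

Lemma merge_step_spans g bs : spans_chains g bs ->
  spans_chains (merge_step A g (map fst bs)).1 (merge_blocks bs).
Proof.
move=> chains; have [part g_up _] := chains; have [_ bs_uniq _] := part.
have [arcs_up cover] := merge_arcs_chains chains (fun rb => id) bs_uniq.
split=> [|u v /orP [/g_up [uv same]|/arcs_up //]|u v /cover //].
  exact: block_partition_merge.
by split=> //; apply: same_block_merge.
Qed.

Lemma is_chains_spans g bs : is_chains g bs -> spans_chains g bs.
Proof.
case=> part g_eq; split=> // u v; rewrite g_eq // => /hasP [rb rb_bs /succ_inP [u_rb v_rb uv _]].
by split=> //; apply/hasP; exists rb; rewrite ?u_rb.
Qed.

Lemma iter_state_chains X0 bs0 : spans_chains X0 bs0 -> forall i, exists bs,
  [/\ is_chains (iter_state A X0 (map fst bs0) i.+1).1 bs,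
      (iter_state A X0 (map fst bs0) i.+1).2 = map fst bs &
      size bs <= maxn 1 (size bs0 - i.+1)].
Proof.
have step g bs : spans_chains g bs ->
    let st := merge_step A g (map fst bs) in
    is_chains (dfs_forest A st.1 st.2) (merge_blocks bs) /\ st.2 = map fst (merge_blocks bs).
  move=> chains /=; rewrite merge_roots_blocks; split=> //.
  exact/dfs_forest_chains/merge_step_spans.
move=> chains0; elim=> [|i [bs [chains_i roots_i size_i]]].
  have [chains1 roots1] := step _ _ chains0; exists (merge_blocks bs0); split=> //.
  by rewrite subn1; apply: size_merge_blocks.
have [chains' roots'] := step _ _ (is_chains_spans chains_i).
set st := iter_state A X0 (map fst bs0) i.+1 in chains_i roots_i *.
rewrite -[iter_state _ _ _ i.+2]/(let ms := merge_step A st.1 st.2 in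
                                  (dfs_forest A ms.1 ms.2, ms.2)).
exists (merge_blocks bs); rewrite roots_i; split=> //.
by have := size_merge_blocks bs; move: size_i; rewrite -!subn1; lia.
Qed.

Lemma is_chains_ham_path g bs : is_chains g bs -> size bs <= 1 ->
  is_ham_path_graph g (sort_by_val A (enum T)).
Proof.
case=> [[_ _ bs_cover] g_eq] size_bs; set s := sort_by_val A (enum T).
have s_all x : x \in s by rewrite mem_sort_by_val mem_enum.
split=> //= [|u v]; first by rewrite sort_uniq enum_uniq.
move: size_bs bs_cover g_eq; case: bs => [_ /(_ u) //|[r b] [|//]] _ /= b_all ->.
rewrite /block_succ /= orbF (@succ_in_eq_mem b s) => [|z]; last by rewrite s_all -[b]cats0 b_all.
have := sort_by_val_ltA_sorted (enum_uniq T); rewrite -/s.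
by case: s s_all => [/(_ u) //|x s'] _ /= /mem_zip_succ ->.
Qed.

End SortedChains.

Section Forest.
Variables (R : realDomainType) (T : finType) (A : T -> R).
Hypothesis A_inj : injective A.
Variable par : T -> option T.
Hypothesis par_lt : forall v u, par v = Some u -> (A u < A v)%R.
Hypothesis child_unique : forall u c1 c2,
  par c1 = Some u -> par c2 = Some u -> par u != None -> c1 = c2.
Hypothesis children_le2 : forall u c1 c2 c3,
  par c1 = Some u -> par c2 = Some u -> par c3 = Some u -> [|| c1 == c2, c1 == c3 | c2 == c3].

Definition forest : rel T := fun u w => par w == Some u.

Local Notation "x ~> y" := (connect forest x y) (at level 70).

Definition rank v := #|[pred y | (A y < A v)%R]|.

Lemma rank_par v u : par v = Some u -> rank u < rank v.
Proof.
move=> /par_lt uv; apply: proper_card; apply/properP; split.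
  by apply/subsetP => y; rewrite !inE => /lt_trans; apply.
by exists u; rewrite !inE ?uv ?ltxx.
Qed.

Lemma connect_le x y : x ~> y -> (A x <= A y)%R.
Proof.
case/connectP => p + ->{y}; elim: p x => [//|z p IH] x /= /andP [/eqP /par_lt xz /IH zp].
exact: le_trans (ltW xz) zp.
Qed.

Lemma connect_fwd x y : x ~> y -> x = y \/ exists2 c, forest x c & c ~> y.
Proof.
case/connectP => [[_ ->|c p]] /=; first by left.
by case/andP => xc p_path y_last; right; exists c => //; apply/connectP; exists p.
Qed.

Lemma connect_bwd x y : x ~> y -> x = y \/ exists2 u, par y = Some u & x ~> u.
Proof.
case/connectP => p; case/lastP: p => [_ ->|p z] /=; first by left.
rewrite rcons_path last_rcons => /andP [p_path /eqP z_par] ->; right.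
by exists (last x p) => //; apply/connectP; exists p.
Qed.

Lemma connect_root v : exists2 r, par r = None & r ~> v.
Proof.
have [m] := ubnP (rank v); elim: m v => [//|m IH] v lt_v.
case E: (par v) => [u|]; last by exists v; rewrite ?connect0.
have [|r r_root ru] := IH u; first by have := rank_par E; lia.
by exists r => //; apply: connect_trans ru (connect1 _); rewrite /forest E.
Qed.

Lemma ancestors_comparable a b v : a ~> v -> b ~> v -> (a ~> b) || (b ~> a).
Proof.
have [m] := ubnP (rank v); elim: m v => [//|m IH] v lt_v av bv.
case: (connect_bwd av) => [->|[u1 vu1 au1]]; first by rewrite bv orbT.
case: (connect_bwd bv) => [->|[u2 vu2 bu2]]; first by rewrite av.
move: vu2; rewrite vu1 => -[eq_u]; apply: IH au1 _; last by rewrite eq_u.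
by have := rank_par vu1; lia.
Qed.

Lemma descendants_comparable a x y : par a != None -> a ~> x -> a ~> y -> (x ~> y) || (y ~> x).
Proof.
move=> a_nonroot /connectP [p p_path ->] {x}.
elim: p a a_nonroot p_path => [|c p IH] a a_nonroot /=; first by move=> _ ->.
case/andP => ac p_path ay; case: (connect_fwd ay) => [<-|[c' ac' c'y]].
  by rewrite orbC; apply/orP; left; apply/connectP; exists (c :: p) => //=; rewrite ac.
have eq_c : c' = c by apply: child_unique a_nonroot; apply/eqP.
by apply: (IH c) => //; [rewrite (eqP ac) | rewrite -eq_c].
Qed.

Lemma root_unique r1 r2 v : par r1 = None -> par r2 = None -> r1 ~> v -> r2 ~> v -> r1 = r2.
Proof.
move=> r1_root r2_root r1v r2v.
have no_anc r r' : par r' = None -> r ~> r' -> r = r'.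
  by move=> r'_root /connect_bwd [//|[u]]; rewrite r'_root.
by case/orP: (ancestors_comparable r1v r2v) => /no_anc; [apply | move=> eq_r; rewrite eq_r].
Qed.

Definition subtree a := [seq v <- enum T | a ~> v].

Lemma mem_subtree a v : (v \in subtree a) = (a ~> v).
Proof. by rewrite mem_filter mem_enum andbT. Qed.

Lemma subtree_uniq a : uniq (subtree a).
Proof. exact/filter_uniq/enum_uniq. Qed.

Lemma subtree_min a z : z \in subtree a -> (A a <= A z)%R.
Proof. by rewrite mem_subtree; apply: connect_le. Qed.

Lemma subtree_up_closed a : up_closed A forest (subtree a).
Proof.
move=> x w; rewrite !mem_subtree => ax /[dup] xw /eqP /par_lt; split=> //.
exact: connect_trans ax (connect1 xw).
Qed.

Lemma subtree_spans a : par a != None -> spans_chain A forest (subtree a).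
Proof.
move=> a_nonroot x y /succ_inP [+ + xy y_min]; rewrite !mem_subtree => ax ay.
case/orP: (descendants_comparable a_nonroot ax ay) => [|/connect_le]; last by rewrite leNgt xy.
case/connect_fwd => [eq_xy|[c xc cy]]; first by rewrite eq_xy ltxx in xy.
have /(y_min c) : c \in subtree a by rewrite mem_subtree (connect_trans ax (connect1 xc)).
by move=> /(_ (par_lt (eqP xc))) /(leA_anti A_inj (connect_le cy)) eq_cy; rewrite -eq_cy.
Qed.

Lemma siblings_disjoint r a b z : par a = Some r -> par b = Some r -> a != b ->
  z \in subtree a -> z \notin subtree b.
Proof.
move=> a_par b_par ab; rewrite !mem_subtree => az; apply/negP => bz.
have below_sibling x y : par x = Some r -> par y = Some r -> x != y -> ~ x ~> y.
  move=> x_par y_par xy /connect_bwd [eq_xy|[u]]; first by rewrite eq_xy eqxx in xy.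
  rewrite y_par => -[<-] /connect_le; rewrite leNgt (par_lt x_par) //.
by case/orP: (ancestors_comparable az bz) => /below_sibling; apply=> //; rewrite eq_sym.
Qed.

Lemma mem_children r c : (c \in children A forest r) = forest r c.
Proof. by rewrite mem_sort_by_val mem_enum inE. Qed.

Lemma uniq_children r : uniq (children A forest r).
Proof. by rewrite sort_uniq enum_uniq. Qed.

Lemma size_children r : size (children A forest r) <= 2.
Proof.
have := uniq_children r; have := mem_children r.
case: (children A forest r) => [|c1 [|c2 [|c3 l]]] //= mem_c.
rewrite !inE !negb_or => /and3P [/and3P [c12 c13 _] /andP [c23 _] _].
have par_c c : c \in [:: c1, c2, c3 & l] -> par c = Some r by rewrite mem_c => /eqP.
have [p1 p2 p3] : [/\ par c1 = Some r, par c2 = Some r & par c3 = Some r].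
  by split; apply: par_c; rewrite !inE eqxx ?orbT.
case/or3P: (children_le2 p1 p2 p3) => /eqP eq_c.
- by rewrite eq_c eqxx in c12.
- by rewrite eq_c eqxx in c13.
- by rewrite eq_c eqxx in c23.
Qed.

Lemma mem_subtree_children r u :
  (u \in subtree r) = (u == r) || has (fun c => u \in subtree c) (children A forest r).
Proof.
rewrite mem_subtree; apply/idP/idP => [/connect_fwd [->|[c rc cu]]|]; first by rewrite eqxx.
  by apply/orP; right; apply/hasP; exists c; rewrite ?mem_children ?mem_subtree.
case/orP => [/eqP ->|/hasP [c]]; first exact: connect0.
by rewrite mem_children mem_subtree => rc; apply: connect_trans (connect1 rc).
Qed.

Lemma succ_in_subtree_root a v : succ_in A (subtree a) a v -> forest a v.
Proof.
case/succ_inP => _; rewrite mem_subtree => /connect_fwd [->|[c ac cv]] av v_min.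
  by rewrite ltxx in av.
have /(v_min c) : c \in subtree a by rewrite mem_subtree connect1.
by move=> /(_ (par_lt (eqP ac))) /(leA_anti A_inj (connect_le cv)) eq_cv; rewrite -eq_cv.
Qed.

Section TwoChildren.
Variables r c1 c2 : T.
Hypothesis children_r : children A forest r = [:: c1; c2].

Lemma two_children_par : par c1 = Some r /\ par c2 = Some r.
Proof.
have : forest r c1 /\ forest r c2 by rewrite -!mem_children children_r !inE !eqxx ?orbT.
by case=> /eqP ? /eqP.
Qed.

Lemma two_children_disjoint z : z \in subtree c1 -> z \notin subtree c2.
Proof.
have [p1 p2] := two_children_par; apply: siblings_disjoint p1 p2 _.
by have := uniq_children r; rewrite children_r /= inE andbT.
Qed.

Lemma two_children_subtree_sub : {subset subtree c1 ++ subtree c2 <= subtree r}.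
Proof.
by move=> z; rewrite mem_subtree_children children_r mem_cat /= orbF => ->; rewrite orbT.
Qed.

Lemma two_children_arcs u v : (u, v) \in merge_chain A #|T|.+1 forest c1 c2 ->
  (A u < A v)%R /\ u \in subtree r /\ v \in subtree r.
Proof.
have c1_in : c1 \in subtree c1 by rewrite mem_subtree connect0.
have c2_in : c2 \in subtree c2 by rewrite mem_subtree connect0.
move=> /(merge_chain_arcs A_inj (@subtree_up_closed c1) (@subtree_up_closed c2)
           (@two_children_disjoint) c1_in c2_in).
by case=> uv [/two_children_subtree_sub -> /two_children_subtree_sub ->].
Qed.

Lemma two_children_spans u v : succ_in A (subtree c1 ++ subtree c2) u v ->
  forest u v || ((u, v) \in merge_chain A #|T|.+1 forest c1 c2).
Proof.
have [p1 p2] := two_children_par.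
apply: (merge_chain_covers A_inj (@subtree_up_closed c1) (@subtree_up_closed c2)
          (@subtree_spans _ _) (@subtree_spans _ _) (@two_children_disjoint)).
- by rewrite p1.
- by rewrite p2.
- by rewrite mem_subtree connect0.
- exact: subtree_min.
- by rewrite mem_subtree connect0.
- exact: subtree_min.
apply/ltnW/uniq_size_le_card; rewrite cat_uniq !subtree_uniq andbT /=.
by apply/hasPn => z; apply: contraL; apply: two_children_disjoint.
Qed.

End TwoChildren.

Definition subtree_merge_arcs : seq (T * T) :=
  flatten [seq (match children A forest r with
                | [:: a; b] => merge_chain A #|T|.+1 forest a b
                | _ => [::] end) | r <- enum T & is_root forest r].

Lemma merge_subtreesE : merge_subtrees A forest = add_arcs forest subtree_merge_arcs.
Proof. by []. Qed.

Lemma is_rootP r : is_root forest r = (par r == None).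
Proof.
apply/forallP/eqP => [r_root|r_root u]; last by rewrite /forest r_root.
by case E: (par r) => [u|//]; have := r_root u; rewrite /forest E eqxx.
Qed.

Lemma subtree_root_spans r : par r = None -> spans_chain A (merge_subtrees A forest) (subtree r).
Proof.
move=> r_root u v /[dup] suv /succ_inP [ur vr uv _]; rewrite merge_subtreesE /add_arcs.
case: (eqVneq u r) => [eq_ur|ur_ne]; first by rewrite eq_ur in suv *; rewrite succ_in_subtree_root.
have vr_ne : v != r.
  by apply: contraTneq uv => ->; rewrite -leNgt (subtree_min ur).
move: (ur) (vr); rewrite !mem_subtree_children (negbTE ur_ne) (negbTE vr_ne) /=.
have := size_children r; case E: (children A forest r) => [|c [|c2 [|//]]] _ //=; rewrite ?orbF.
  move=> uc vc; have rc : forest r c by rewrite -mem_children E mem_head.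
  have c_nonroot : par c != None by rewrite (eqP rc).
  apply/orP; left; apply: (@subtree_spans c c_nonroot); apply: succ_in_restrict uc vc _ suv.
  by move=> z; rewrite !mem_subtree => cz _; apply: connect_trans (connect1 rc) cz.
rewrite -!mem_cat => uc vc.
have suv' : succ_in A (subtree c ++ subtree c2) u v.
  by apply: succ_in_restrict uc vc _ suv => z /(two_children_subtree_sub E).
case/orP: (two_children_spans E suv') => [-> //|uv_arc]; apply/orP; right.
by apply/flatten_mapP; exists r; rewrite ?E // mem_filter is_rootP r_root mem_enum.
Qed.

Lemma subtree_merge_arcs_same u v : (u, v) \in subtree_merge_arcs ->
  (A u < A v)%R /\ exists2 r, par r = None & (u \in subtree r) && (v \in subtree r).
Proof.
case/flatten_mapP => r; rewrite mem_filter is_rootP => /andP [/eqP r_root _].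
case E: (children A forest r) => [|a [|b [|? ?]]] // /(two_children_arcs E) [uv [ur vr]].
by split=> //; exists r; rewrite ?ur.
Qed.

Lemma uniq_subtrees rs : uniq rs -> (forall r, r \in rs -> par r = None) ->
  uniq (flatten (map subtree rs)).
Proof.
elim: rs => [//|r rs IH] /= /andP [r_notin rs_uniq] roots.
have rs_roots r' : r' \in rs -> par r' = None by move=> r'_in; apply: roots; rewrite inE r'_in orbT.
rewrite cat_uniq subtree_uniq IH //= andbT.
apply/hasP => -[x /flatten_mapP [r' r'_in]]; rewrite !mem_subtree => r'x rx.
have eq_r : r = r'.
  by apply: root_unique _ _ rx r'x; [apply: roots (mem_head _ _) | apply: rs_roots].
by rewrite eq_r r'_in in r_notin.
Qed.

Lemma merge_subtrees_spans R0 : perm_eq R0 [seq r <- enum T | is_root forest r] ->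
  spans_chains A (merge_subtrees A forest) [seq (r, subtree r) | r <- R0].
Proof.
move=> R0_perm.
have mem_R0 r : (r \in R0) = (par r == None).
  by rewrite (perm_mem R0_perm) mem_filter mem_enum andbT is_rootP.
have snd_blocks : map snd [seq (r, subtree r) | r <- R0] = map subtree R0 by rewrite -map_comp.
have same r u v : par r = None -> u \in subtree r -> v \in subtree r ->
    same_block [seq (r, subtree r) | r <- R0] u v.
  move=> r_root ur vr; apply/hasP; exists (r, subtree r); rewrite ?ur ?vr //.
  by rewrite map_f ?mem_R0 ?r_root.
split; first split.
- move=> _ /mapP [r _ ->] /=; split; [by rewrite mem_subtree connect0 | exact: subtree_min].
- rewrite snd_blocks; apply: uniq_subtrees => [|r]; last by rewrite mem_R0 => /eqP.
  by rewrite (perm_uniq R0_perm) filter_uniq ?enum_uniq.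
- move=> x; rewrite snd_blocks; have [r r_root rx] := connect_root x.
  by apply/flatten_mapP; exists r; rewrite ?mem_R0 ?r_root ?mem_subtree.
- move=> u v; rewrite merge_subtreesE.
  case/orP => [uv|/subtree_merge_arcs_same [uv [r r_root /andP [ur vr]]]].
    have [r r_root ru] := connect_root u; split; first exact: par_lt (eqP uv).
    by apply: (same r) => //; rewrite mem_subtree // (connect_trans ru (connect1 uv)).
  by split=> //; apply: (same r).
- move=> u v /hasP [_ /mapP [r r_R0 ->] /= suv]; apply: subtree_root_spans suv.
  by apply/eqP; rewrite -mem_R0.
Qed.

End Forest.

Section ReachOne.
Variables (R : realDomainType) (n : nat) (A : 'I_n -> R).

Local Notation G := (corr_graph A 1).

Lemma corr_graph_lt i j : G i j -> (A i < A j)%R.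
Proof. by case/and3P. Qed.

Lemma succ_mod_cases (x y : 'I_n) : x.+1 %% n = y ->
  x.+1 = n /\ y = 0 :> nat \/ x.+1 < n /\ y = x.+1 :> nat.
Proof.
move=> <-; case: (ltngtP x.+1 n) => [lt_xn|lt_nx|->]; last by rewrite modnn; left.
  by rewrite modn_small //; right.
by have := ltn_ord x; lia.
Qed.

Lemma corr_graph1_adj i j : G i j ->
  (i.+1 = n /\ j = 0 :> nat \/ i.+1 < n /\ j = i.+1 :> nat) \/
  (j.+1 = n /\ i = 0 :> nat \/ j.+1 < n /\ i = j.+1 :> nat).
Proof.
case/and3P => _ _ /existsP [k]; rewrite (ord1 k) /= !addn1.
by case/orP => /eqP /succ_mod_cases; [left | right].
Qed.

Lemma corr_graph1_out_unique u c1 c2 w : G u c1 -> G u c2 -> G w u -> c1 = c2.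
Proof.
move=> uc1 uc2 wu; apply: ord_inj.
have w_neq c : G u c -> (w : nat) <> c.
  move=> uc /val_inj eq_w.
  by have := lt_trans (corr_graph_lt wu) (corr_graph_lt uc); rewrite eq_w ltxx.
have := w_neq _ uc1; have := w_neq _ uc2.
have := corr_graph1_adj uc1; have := corr_graph1_adj uc2; have := corr_graph1_adj wu.
by have := ltn_ord u; have := ltn_ord c1; have := ltn_ord c2; have := ltn_ord w; lia.
Qed.

Lemma corr_graph1_out_le2 u c1 c2 c3 : G u c1 -> G u c2 -> G u c3 ->
  [|| c1 == c2, c1 == c3 | c2 == c3].
Proof.
move=> uc1 uc2 uc3; apply/negPn/negP; rewrite !negb_or => /and3P [/eqP c12 /eqP c13 /eqP c23].
have [v12 v13 v23] : [/\ (c1 : nat) <> c2, (c1 : nat) <> c3 & (c2 : nat) <> c3].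
  by split=> /val_inj.
have := corr_graph1_adj uc1; have := corr_graph1_adj uc2; have := corr_graph1_adj uc3.
by have := ltn_ord u; have := ltn_ord c1; have := ltn_ord c2; have := ltn_ord c3; lia.
Qed.

End ReachOne.

Theorem theorem11 (R : realType) (n : nat) (A : 'I_n -> R) (L R0 : seq 'I_n) :
  injective A ->
  perm_eq L (enum 'I_n) ->
  perm_eq R0 [seq r <- enum 'I_n | is_root (dfs_forest A (corr_graph A 1) L) r] ->
  exists i : nat, exists s : seq 'I_n,
    let Fi := (iter_state A (merge_subtrees A (dfs_forest A (corr_graph A 1) L)) R0 i.+1).1 in
    is_ham_path_graph Fi s /\
    (forall t : seq 'I_n, is_topsort Fi t <-> t = sort_by_val A (enum 'I_n)).
Proof.
(* Any visiting list works: only the shape of the DFS forest of the cycle matters. *)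
move=> A_inj _ R0_perm.
pose par := dfs_parent A (corr_graph A 1) L.
have arc v u : par v = Some u -> corr_graph A 1 u v by apply: dfs_parent_arc.
have par_lt v u : par v = Some u -> (A u < A v)%R by move/arc/corr_graph_lt.
have child_unique u c1 c2 : par c1 = Some u -> par c2 = Some u -> par u != None -> c1 = c2.
  move=> /arc uc1 /arc uc2; case E: (par u) => [w|//] _.
  exact: corr_graph1_out_unique uc1 uc2 (arc _ _ E).
have children_le2 u c1 c2 c3 : par c1 = Some u -> par c2 = Some u -> par c3 = Some u ->
    [|| c1 == c2, c1 == c3 | c2 == c3].
  by move=> /arc uc1 /arc uc2 /arc uc3; apply: corr_graph1_out_le2 uc1 uc2 uc3.
have chains0 := merge_subtrees_spans A_inj par_lt child_unique children_le2 R0_perm.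
have [bs [chains _ size_bs]] := iter_state_chains A_inj chains0 (size R0).
have size1 : size bs <= 1 by move: size_bs; rewrite size_map subnS subnn maxn0.
have roots0 : map fst [seq (r, subtree par r) | r <- R0] = R0 by rewrite -map_comp map_id_in.
rewrite roots0 in chains.
have ham := is_chains_ham_path A_inj chains size1.
exists (size R0), (sort_by_val A (enum 'I_n)); split=> // t.
exact: ham_path_topsortP ham.
Qed.
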